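(* Let $k$ be a commutative ring with set of maximal ideals $M$, and let $K_\alpha$, $\pi_{\alpha\beta}$, $K$ be as in the context, with canonical projections $\pi_\alpha:K\to K_\alpha$. Then the homomorphism \[ \Phi:\mathrm{Pic}(K)\to\varprojlim\bigl(\mathrm{Pic}(K_\alpha),\mathrm{Pic}(\pi_{\alpha\beta})\bigr) \] induced by the maps $\mathrm{Pic}(\pi_\alpha)$ is injective.
   Context: Let $\{M_\alpha\}_{\alpha\in I}$ be finite subsets of $M$ with $\bigcup_\alpha M_\alpha=M$ that are linearly ordered by inclusion. For $M_\alpha=\{\mathfrak m_1,\dots,\mathfrak m_n\}$ put $K_\alpha=k_{\mathfrak m_1}\oplus\cdots\oplus k_{\mathfrak m_n}$ (direct product of localizations); for $M_\alpha\subseteq M_\beta$ let $\pi_{\alpha\beta}:K_\beta\to K_\alpha$ be the canonical projection, and $K=\varprojlim(K_\alpha,\pi_{\alpha\beta})$. $\mathrm{Pic}$ denotes the Picard group. *)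

From HB Require Import structures.
From mathcomp Require Import all_boot all_order all_algebra.
From mathcomp Require Import boolp classical_sets cardinality.
From mathcomp Require Import mxtens.

Set Implicit Arguments.
Unset Strict Implicit.
Unset Printing Implicit Defensive.

Import GRing.Theory.
Local Open Scope ring_scope.
Local Open Scope classical_set_scope.

Definition is_ideal (R : comPzRingType) (I : set R) : Prop :=
  I 0 /\ (forall x y, I x -> I y -> I (x + y)) /\
  (forall a x, I x -> I (a * x)).

Definition is_maximal_ideal (R : comPzRingType) (I : set R) : Prop :=
  [/\ is_ideal I, ~ I 1 &
      forall J : set R, is_ideal J -> I `<=` J -> J = I \/ J = setT].

Definition maxideal (R : comPzRingType) := {I : set R | is_maximal_ideal I}.

(* [f : R -> S] is (a) localization of R at the prime ideal P, i.e. at the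
   multiplicative set R \ P (characterization by the universal property,
   Atiyah--Macdonald Cor. 3.2): this determines S up to unique iso. *)
Definition is_localization (R S : comPzRingType) (P : set R)
    (f : {rmorphism R -> S}) : Prop :=
  [/\ forall s, ~ P s -> exists t, f s * t = 1,
      forall a, f a = 0 -> exists2 s, ~ P s & s * a = 0 &
      forall x, exists a s, ~ P s /\ x * f s = f a].

Section DProd.
Variables (I : Type) (R : I -> comPzRingType).

Record dprod := DProd { dpval : forall i, R i }.

HB.instance Definition _ := gen_eqMixin dprod.
HB.instance Definition _ := gen_choiceMixin dprod.

Lemma dprod_ext (x y : dprod) : (forall i, dpval x i = dpval y i) -> x = y.
Proof.
case: x; case: y => f g /= H.
by have -> : g = f by apply: functional_extensionality_dep.
Qed.

Definition dp_zero := DProd (fun i => 0).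
Definition dp_opp (x : dprod) := DProd (fun i => - dpval x i).
Definition dp_add (x y : dprod) := DProd (fun i => dpval x i + dpval y i).
Definition dp_one := DProd (fun i => 1).
Definition dp_mul (x y : dprod) := DProd (fun i => dpval x i * dpval y i).

Lemma dp_addA : associative dp_add.
Proof. by move=> x y z; apply: dprod_ext => i /=; rewrite addrA. Qed.
Lemma dp_addC : commutative dp_add.
Proof. by move=> x y; apply: dprod_ext => i /=; rewrite addrC. Qed.
Lemma dp_add0 : left_id dp_zero dp_add.
Proof. by move=> x; apply: dprod_ext => i /=; rewrite add0r. Qed.
Lemma dp_addN : left_inverse dp_zero dp_opp dp_add.
Proof. by move=> x; apply: dprod_ext => i /=; rewrite addNr. Qed.

HB.instance Definition _ :=
  GRing.isZmodule.Build dprod dp_addA dp_addC dp_add0 dp_addN.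

Lemma dp_mulA : associative dp_mul.
Proof. by move=> x y z; apply: dprod_ext => i /=; rewrite mulrA. Qed.
Lemma dp_mulC : commutative dp_mul.
Proof. by move=> x y; apply: dprod_ext => i /=; rewrite mulrC. Qed.
Lemma dp_mul1 : left_id dp_one dp_mul.
Proof. by move=> x; apply: dprod_ext => i /=; rewrite mul1r. Qed.
Lemma dp_mulDl : left_distributive dp_mul (@GRing.add dprod).
Proof. by move=> x y z; apply: dprod_ext => i /=; rewrite mulrDl. Qed.

HB.instance Definition _ :=
  GRing.Zmodule_isComPzRing.Build dprod dp_mulA dp_mulC dp_mul1 dp_mulDl.

End DProd.

Section Limit.
Variables (T : Type) (L : T -> comPzRingType) (J : Type) (Ms : J -> set T).

Definition Kal (a : J) : comPzRingType :=
  dprod (fun m : {x : T | Ms a x} => L (proj1_sig m)).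

Definition piab (a b : J) (h : Ms a `<=` Ms b) (x : Kal b) : Kal a :=
  DProd (fun m : {x : T | Ms a x} =>
    dpval x (exist (fun t => Ms b t) (proj1_sig m) (h _ (proj2_sig m)))).

Record Klim := KLim {
  klval : forall a, Kal a;
  klP : forall a b (h : Ms a `<=` Ms b), piab h (klval b) = klval a }.

HB.instance Definition _ := gen_eqMixin Klim.
HB.instance Definition _ := gen_choiceMixin Klim.

Lemma Klim_ext (x y : Klim) : (forall a, klval x a = klval y a) -> x = y.
Proof.
case: x => f fP; case: y => g gP /= H.
have E : f = g by apply: functional_extensionality_dep.
subst g; congr KLim; exact: Prop_irrelevance.
Qed.

Lemma piab_add a b (h : Ms a `<=` Ms b) (x y : Kal b) :
  piab h (x + y) = piab h x + piab h y.
Proof. by apply: dprod_ext. Qed.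
Lemma piab_opp a b (h : Ms a `<=` Ms b) (x : Kal b) :
  piab h (- x) = - piab h x.
Proof. by apply: dprod_ext. Qed.
Lemma piab_mul a b (h : Ms a `<=` Ms b) (x y : Kal b) :
  piab h (x * y) = piab h x * piab h y.
Proof. by apply: dprod_ext. Qed.
Lemma piab0 a b (h : Ms a `<=` Ms b) : piab h 0 = 0.
Proof. by apply: dprod_ext. Qed.
Lemma piab1 a b (h : Ms a `<=` Ms b) : piab h 1 = 1.
Proof. by apply: dprod_ext. Qed.

Definition kl_zero := KLim (fun a b h => piab0 h).
Definition kl_one := KLim (fun a b h => piab1 h).
Definition kl_opp (x : Klim) :=
  KLim (fun a b h => etrans (piab_opp h (klval x b)) (f_equal -%R (klP x h))).
Definition kl_add (x y : Klim) :=
  KLim (fun a b h => etrans (piab_add h (klval x b) (klval y b))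
                      (f_equal2 +%R (klP x h) (klP y h))).
Definition kl_mul (x y : Klim) :=
  KLim (fun a b h => etrans (piab_mul h (klval x b) (klval y b))
                      (f_equal2 *%R (klP x h) (klP y h))).

Lemma kl_addA : associative kl_add.
Proof. by move=> x y z; apply: Klim_ext => a /=; rewrite addrA. Qed.
Lemma kl_addC : commutative kl_add.
Proof. by move=> x y; apply: Klim_ext => a /=; rewrite addrC. Qed.
Lemma kl_add0 : left_id kl_zero kl_add.
Proof. by move=> x; apply: Klim_ext => a /=; rewrite add0r. Qed.
Lemma kl_addN : left_inverse kl_zero kl_opp kl_add.
Proof. by move=> x; apply: Klim_ext => a /=; rewrite addNr. Qed.

HB.instance Definition _ :=
  GRing.isZmodule.Build Klim kl_addA kl_addC kl_add0 kl_addN.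

Lemma kl_mulA : associative kl_mul.
Proof. by move=> x y z; apply: Klim_ext => a /=; rewrite mulrA. Qed.
Lemma kl_mulC : commutative kl_mul.
Proof. by move=> x y; apply: Klim_ext => a /=; rewrite mulrC. Qed.
Lemma kl_mul1 : left_id kl_one kl_mul.
Proof. by move=> x; apply: Klim_ext => a /=; rewrite mul1r. Qed.
Lemma kl_mulDl : left_distributive kl_mul (@GRing.add Klim).
Proof. by move=> x y z; apply: Klim_ext => a /=; rewrite mulrDl. Qed.

HB.instance Definition _ :=
  GRing.Zmodule_isComPzRing.Build Klim kl_mulA kl_mulC kl_mul1 kl_mulDl.

Definition piK (a : J) (x : Klim) : Kal a := klval x a.

End Limit.

(* A finitely generated projective R-module is represented as the       *)
(* row space im(e) = { x *m e } of an idempotent e : 'M[R]_n.           *)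

(* im(e) and im(f) are isomorphic R-modules: A : im e -> im f (x |-> x A)
   and B : im f -> im e are mutually inverse homomorphisms. *)
Definition mx_iso (R : comPzRingType) (n p : nat)
    (e : 'M[R]_n) (f : 'M[R]_p) : Prop :=
  exists (A : 'M[R]_(n, p)) (B : 'M[R]_(p, n)),
    [/\ e *m A *m f = A, f *m B *m e = B, A *m B = e & B *m A = f].

(* im(e) is an invertible R-module: e is idempotent and there is a
   f.g. projective module im(g) with im(e) (x) im(g) = im(e *t g) ~= R. *)
Definition invertible_mx (R : comPzRingType) (n : nat) (e : 'M[R]_n) : Prop :=
  e *m e = e /\
  exists (q : nat) (g : 'M[R]_q),
    g *m g = g /\ mx_iso (tensmx e g) (1%:M : 'M[R]_1).

(* base change of im(e) along a ring map phi: im(e) (x)_R S = im(phi e) *)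
Definition base_change (R S : comPzRingType) (phi : R -> S) (n : nat)
    (e : 'M[R]_n) : 'M[S]_n := map_mx phi e.

From HB Require Import structures.
From mathcomp Require Import all_boot all_order all_algebra.
From mathcomp Require Import boolp classical_sets cardinality.
From mathcomp Require Import mxtens.

(* Since the M_alpha form a chain covering M, a compatible family in K is the
   same as a family (x_m)_m with x_m in k_m, so K is the product of the local
   rings k_m.  Over a local ring every invertible module im(e) is free of rank
   one: from im(e) (x) im(g) ~= R the trace of e (x) g is 1, so some diagonal
   entry e_ii g_jj is a unit, and the j-th slice of the isomorphism factors e
   as a column times a row.  Gluing these coordinatewise isomorphisms shows
   that every invertible K-module is free, i.e. Pic(K) = 0; hence Phi is
   injective. *)

Set Implicit Arguments.
Unset Strict Implicit.
Unset Printing Implicit Defensive.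

Import GRing.Theory.
Local Open Scope ring_scope.
Local Open Scope classical_set_scope.

Definition is_unit (R : comPzRingType) (x : R) : Prop := exists y, x * y = 1.

Definition is_local_ring (R : comPzRingType) : Prop :=
  (1 : R) <> 0 /\ forall x : R, is_unit x \/ is_unit (1 - x).

Section LocalRing.
Variable R : comPzRingType.
Hypothesis R_local : is_local_ring R.

Lemma local_nonunit0 : ~ is_unit (0 : R).
Proof. by case=> y; rewrite mul0r => /esym; case: R_local. Qed.

Lemma local_nonunitD (x y : R) : ~ is_unit x -> ~ is_unit y -> ~ is_unit (x + y).
Proof.
move=> nux nuy [u xyu]; case: R_local => _ /(_ (x * u)) [[v xuv]|[v xuv]].
  by apply: nux; exists (u * v); rewrite mulrA.
have yu : y * u = 1 - x * u by rewrite -xyu mulrDl addrAC subrr add0r.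
by apply: nuy; exists (u * v); rewrite mulrA yu.
Qed.

Lemma local_sum1_unit (I : Type) (r : seq I) (F : I -> R) :
  \sum_(i <- r) F i = 1 -> exists i, is_unit (F i).
Proof.
move=> sumF1; apply: contrapT => /forallNP nuF.
suff : ~ is_unit (\sum_(i <- r) F i) by rewrite sumF1; apply; exists 1; rewrite mulr1.
by apply: (big_ind (fun x => ~ is_unit x)) => //;
  [exact: local_nonunit0 | exact: local_nonunitD].
Qed.

End LocalRing.

Lemma localization_is_local (R S : comPzRingType) (P : set R)
    (f : {rmorphism R -> S}) :
  is_ideal P -> is_localization P f -> is_local_ring S.
Proof.
move=> [P0 [PD _]] [f_unit f_kernel f_frac]; split.
  move=> S10; have [s Ps] : exists2 s, ~ P s & s * 1 = 0.
    by apply: f_kernel; rewrite rmorph1.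
  by rewrite mulr1 => s0; apply: Ps; rewrite s0.
move=> x; have [a [s [Ps xs]]] := f_frac x.
have [Pa | Pa] := pselect (P a); last first.
  by have [v av] := f_unit a Pa; left; exists (f s * v); rewrite mulrA xs.
have Psa : ~ P (s - a) by move=> Psa; apply: Ps; rewrite -(subrK a s); exact: PD.
have [v sav] := f_unit _ Psa.
by right; exists (f s * v); rewrite mulrA mulrBl mul1r xs -rmorphB.
Qed.

Section IdempotentMatrices.
Variable R : comPzRingType.

Lemma mx_iso_mxtrace n p (e : 'M[R]_n) (f : 'M[R]_p) : mx_iso e f -> \tr e = \tr f.
Proof. by case=> A [B [_ _ <- <-]]; exact: mxtrace_mulC. Qed.

Lemma mx_iso1_trans n p (e : 'M[R]_n) (f : 'M[R]_p) :
  mx_iso e (1%:M : 'M[R]_1) -> mx_iso f (1%:M : 'M[R]_1) -> mx_iso e f.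
Proof.
move=> [Ae [Be [+ + AeBe BeAe]]] [Af [Bf [+ + AfBf BfAf]]].
rewrite !mulmx1 !mul1mx => eAe Bee fAf Bff.
exists (Ae *m Bf), (Af *m Be); split.
- by rewrite mulmxA eAe -mulmxA Bff.
- by rewrite mulmxA fAf -mulmxA Bee.
- by rewrite mulmxA -(mulmxA Ae) BfAf mulmx1.
- by rewrite mulmxA -(mulmxA Af) BeAe mulmx1.
Qed.

Lemma map_mx_iso (S : comPzRingType) (phi : {rmorphism R -> S}) n p
    (e : 'M[R]_n) (f : 'M[R]_p) :
  mx_iso e f -> mx_iso (map_mx phi e) (map_mx phi f).
Proof.
case=> A [B [eAf fBe ABe BAf]]; exists (map_mx phi A), (map_mx phi B).
by split; rewrite -!map_mxM ?eAf ?fBe ?ABe ?BAf.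
Qed.

Lemma map_invertible_mx (S : comPzRingType) (phi : {rmorphism R -> S}) n
    (e : 'M[R]_n) :
  invertible_mx e -> invertible_mx (map_mx phi e).
Proof.
case=> ee [q [g [gg iso_eg]]]; split; first by rewrite -map_mxM ee.
exists q, (map_mx phi g); split; first by rewrite -map_mxM gg.
by rewrite -map_mxT -(map_mx1 phi); exact: map_mx_iso.
Qed.

Lemma tensmx_factor_slice n q (e : 'M[R]_n) (g : 'M[R]_q)
    (C : 'M[R]_(n * q, 1)) (D : 'M[R]_(1, n * q)) (j : 'I_q) (v : R) :
  C *m D = e *t g -> g j j * v = 1 ->
  exists (A : 'M[R]_(n, 1)) (B : 'M[R]_(1, n)), A *m B = e.
Proof.
move=> CDeg gv.
exists (\matrix_(i, _) C (mxtens_index (i, j)) 0).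
exists (\matrix_(_, i) (D 0 (mxtens_index (i, j)) * v)).
apply/matrixP => i i'; rewrite !mxE big_ord1 !mxE mulrA.
have := congr1 (fun M : 'M_(n * q) => M (mxtens_index (i, j)) (mxtens_index (i', j)))
  CDeg.
by rewrite /= tensmxE mxE big_ord1 => ->; rewrite -mulrA gv mulr1.
Qed.

(* B A is a scalar s with e = s e; a unit diagonal entry of e forces s = 1. *)
Lemma idempotent_rank1_iso1 n (e : 'M[R]_n) (A : 'M[R]_(n, 1)) (B : 'M[R]_(1, n))
    (i : 'I_n) (w : R) :
  e *m e = e -> A *m B = e -> e i i * w = 1 -> mx_iso e (1%:M : 'M[R]_1).
Proof.
move=> ee ABe eiw; pose s := (B *m A) 0 0.
have BAs : B *m A = s%:M by apply/matrixP => i0 j0; rewrite !ord1 /s !mxE eqxx mulr1n.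
have e_se : e = s *: e.
  by rewrite -{1}ee -ABe mulmxA -(mulmxA A) BAs mul_mx_scalar scalemxAl.
have s1 : s = 1.
  by have := congr1 (fun M : 'M_n => M i i * w) e_se; rewrite /= mxE -mulrA eiw mulr1.
have BA1 : B *m A = 1%:M by rewrite BAs s1.
exists A, B; split => //.
- by rewrite mulmx1 -ABe -mulmxA BA1 mulmx1.
- by rewrite mul1mx -ABe mulmxA BA1 mul1mx.
Qed.

Lemma local_invertible_mx_iso1 n (e : 'M[R]_n) :
  is_local_ring R -> invertible_mx e -> mx_iso e (1%:M : 'M[R]_1).
Proof.
move=> R_local [ee [q [g [_ iso_eg]]]].
have [C [D [_ _ CDeg _]]] := iso_eg.
have tr_eg : \sum_k (e *t g) k k = 1.
  by rewrite -/(\tr _) (mx_iso_mxtrace iso_eg) mxtrace1.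
have [k [u unit_k]] := local_sum1_unit R_local tr_eg.
case: (mxtens_indexP k) unit_k => i j; rewrite tensmxE => eg_u.
have [A [B ABe]] : exists (A : 'cV[R]_n) (B : 'rV[R]_n), A *m B = e.
  apply: (tensmx_factor_slice (j := j) (v := e i i * u) CDeg).
  by rewrite mulrCA mulrA.
by apply: (idempotent_rank1_iso1 (i := i) (w := g j j * u) ee ABe); rewrite mulrA.
Qed.

End IdempotentMatrices.

Section LimitCoordinates.
Variables (T : Type) (L : T -> comPzRingType) (J : Type) (Ms : J -> set T).
Hypothesis Ms_chain : forall a b, Ms a `<=` Ms b \/ Ms b `<=` Ms a.
Hypothesis Ms_cover : forall t, exists a, Ms a t.

Definition coord (t : T) (x : Klim L Ms) : L t :=
  dpval (klval x (sval (cid (Ms_cover t))))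
    (exist _ t (svalP (cid (Ms_cover t)))).

Lemma coordE t a (Mat : Ms a t) x : coord t x = dpval (klval x a) (exist _ t Mat).
Proof.
rewrite /coord; case: cid => b Mbt /=.
case: (Ms_chain a b) => sub; rewrite -(klP x sub) /piab /=;
  congr (dpval _ (exist _ t _)); exact: Prop_irrelevance.
Qed.

Lemma coord_ext x y : (forall t, coord t x = coord t y) -> x = y.
Proof.
by move=> xy; apply: Klim_ext => a; apply: dprod_ext => -[t Mat]; rewrite -!coordE.
Qed.

Definition of_coords (c : forall t, L t) : Klim L Ms :=
  @KLim _ L _ Ms (fun a => DProd (fun m : {t | Ms a t} => c (sval m)))
    (fun _ _ _ => erefl).

Lemma coord_of_coords c t : coord t (of_coords c) = c t.
Proof. by []. Qed.

Section CoordMorphism.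
Variable t : T.
Fact coord_is_zmod_morphism : zmod_morphism (coord t). Proof. by []. Qed.
Fact coord_is_monoid_morphism : monoid_morphism (coord t). Proof. by []. Qed.
HB.instance Definition _ :=
  GRing.isZmodMorphism.Build _ _ (coord t) coord_is_zmod_morphism.
HB.instance Definition _ :=
  GRing.isMonoidMorphism.Build _ _ (coord t) coord_is_monoid_morphism.
End CoordMorphism.

Lemma map_coord_mx_ext m n (X Y : 'M[Klim L Ms]_(m, n)) :
  (forall t, map_mx (coord t) X = map_mx (coord t) Y) -> X = Y.
Proof.
move=> XY; apply/matrixP => i j; apply: coord_ext => t.
by have := congr1 (fun M : 'M[L t]_(m, n) => M i j) (XY t); rewrite !mxE.
Qed.

Lemma mx_iso_coords n p (e : 'M[Klim L Ms]_n) (f : 'M[Klim L Ms]_p) :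
  (forall t, mx_iso (map_mx (coord t) e) (map_mx (coord t) f)) -> mx_iso e f.
Proof.
move=> iso_t; pose A t := sval (cid (iso_t t)).
have isoA t := svalP (cid (iso_t t)); pose B t := sval (cid (isoA t)).
have isoAB t := svalP (cid (isoA t)).
exists (\matrix_(i, j) of_coords (fun t => A t i j)).
exists (\matrix_(i, j) of_coords (fun t => B t i j)).
have mapA t : map_mx (coord t) (\matrix_(i, j) of_coords (fun t => A t i j)) = A t.
  by apply/matrixP => i j; rewrite !mxE coord_of_coords.
have mapB t : map_mx (coord t) (\matrix_(i, j) of_coords (fun t => B t i j)) = B t.
  by apply/matrixP => i j; rewrite !mxE coord_of_coords.
by split; apply: map_coord_mx_ext => t; rewrite ?map_mxM ?mapA ?mapB; case: (isoAB t).
Qed.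

End LimitCoordinates.

Unset Implicit Arguments.

Theorem theorem8p3
  (k : comPzRingType)
  (L : maxideal k -> comPzRingType)
  (phi : forall m : maxideal k, {rmorphism k -> L m})
  (hloc : forall m : maxideal k, is_localization (proj1_sig m) (phi m))
  (I : Type) (Ms : I -> set (maxideal k))
  (hfin : forall a, finite_set (Ms a))
  (hchain : forall a b, Ms a `<=` Ms b \/ Ms b `<=` Ms a)
  (hcover : forall m : maxideal k, exists a, Ms a m)
  (n p : nat) (e : 'M[Klim L Ms]_n) (f : 'M[Klim L Ms]_p) :
  invertible_mx e -> invertible_mx f ->
  (forall a : I, mx_iso (base_change (piK a) e) (base_change (piK a) f)) ->
  mx_iso e f.
Proof.
move=> inv_e inv_f _.
apply: (mx_iso_coords hchain (Ms_cover := hcover)) => m.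
have L_local : is_local_ring (L m).
  by have [m_ideal _ _] := proj2_sig m; exact: localization_is_local m_ideal (hloc m).
by apply: mx_iso1_trans; apply: local_invertible_mx_iso1 L_local _;
  exact: map_invertible_mx.
Qed.
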